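(* Let $K\subset\mathbb{R}^m$ be a self-dual cone and $L\subset\mathbb{R}^m$ a proper cone. If $K$ is an $L$-isotone projection set and at least one of $\operatorname{int}(K)\cap L$ or $\operatorname{int}(K)\cap L^*$ is nonempty, then $K=A\mathbb{R}^m_+$ for some orthogonal $m\times m$ matrix $A$. Moreover, the only proper cones $L$ such that $\mathbb{R}^m_+$ is an $L$-isotone projection set are the orthants of the reference system, i.e. the cones $\{x\in\mathbb{R}^m:\varepsilon^i x^i\ge 0,\ i=1,\dots,m\}$ with $\varepsilon^i\in\{-1,1\}$.
   Context: $\mathbb{R}^m$ carries the standard inner product with a fixed Cartesian coordinate system, and $\mathbb{R}^m_+=\{x:x^i\ge 0,\ i=1,\dots,m\}$. A convex cone is a nonempty set $K$ with $K+K\subset K$, $tK\subset K$ for $t\ge0$; a proper cone is a closed convex cone that is pointed ($K\cap(-K)=\{0\}$) and generating ($K-K=\mathbb{R}^m$). The dual cone is $K^*=\{y:\langle x,y\rangle\ge0\ \forall x\in K\}$; $K$ is self-dual if $K=K^*$. For a cone $L$, $x\le_L y$ means $y-x\in L$. $P_D$ is the metric projection onto a nonempty closed convex set $D$; $D$ is an $L$-isotone projection set if $x\le_L y$ implies $P_Dx\le_L P_Dy$. *)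

(* R : realType, vectors of R^m are column vectors 'cV[R]_m,
   the coordinate system is the standard one, x^i = x i 0. *)
From HB Require Import structures.
From mathcomp Require Import all_boot all_order all_algebra.
From mathcomp Require Import all_classical all_reals all_analysis.
Set Implicit Arguments. Unset Strict Implicit. Unset Printing Implicit Defensive.
Import Order.TTheory GRing.Theory Num.Theory.
Local Open Scope classical_set_scope.
Local Open Scope ring_scope.
Import numFieldNormedType.Exports.

Section Cones.
Variables (R : realType) (m : nat).
Local Notation V := 'cV[R]_m.

Definition dotv (x y : V) : R := \sum_(i < m) x i 0 * y i 0.

Definition convex_cone (K : set V) : Prop :=
  K !=set0 /\
  (forall x y, K x -> K y -> K (x + y)) /\
  (forall (t : R) x, 0 <= t -> K x -> K (t *: x)).

Definition pointed (K : set V) : Prop := forall x, K x -> K (- x) -> x = 0.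
Definition generating (K : set V) : Prop :=
  forall z, exists x y, K x /\ K y /\ z = x - y.

Definition proper_cone (K : set V) : Prop :=
  convex_cone K /\ closed K /\ pointed K /\ generating K.

Definition dual_cone (K : set V) : set V :=
  [set y | forall x, K x -> 0 <= dotv x y].

Definition self_dual (K : set V) : Prop := K = dual_cone K.

Definition cle (L : set V) (x y : V) : Prop := L (y - x).

Definition is_proj (D : set V) (x p : V) : Prop :=
  D p /\ forall z, D z -> dotv (x - p) (x - p) <= dotv (x - z) (x - z).

Definition isotone_proj_set (L D : set V) : Prop :=
  D !=set0 /\ closed D /\ convex_set D /\
  forall x y px py, cle L x y -> is_proj D x px -> is_proj D y py -> cle L px py.

Definition nonneg_orthant : set V := [set x | forall i, 0 <= x i 0].

Definition is_orthant (L : set V) : Prop :=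
  exists eps : 'I_m -> R, (forall i, eps i = 1 \/ eps i = -1) /\
    L = [set x | forall i, 0 <= eps i * x i 0].

Definition orthogonal_mx (A : 'M[R]_m) : Prop := A *m A^T = 1%:M.

End Cones.

From HB Require Import structures.
From mathcomp Require Import all_boot all_order all_algebra.
From mathcomp Require Import all_classical all_reals all_analysis.
From mathcomp Require Import ring lra.
Import Order.TTheory GRing.Theory Num.Theory.
Local Open Scope classical_set_scope.
Local Open Scope ring_scope.
Import numFieldNormedType.Exports.

(* If the interior of K meets L or L*, isotonicity of P_K with respect to L
   forces L = K: compare - w <=_L k for w, k in K, and P_K (- l) <=_L P_K 0
   for l in L.  So P_K is K-isotone.  With Moreau's decomposition
   x = P_K x - P_K (- x) into orthogonal parts, isotonicity shows that every
   nonzero element of K dominates an extreme vector, and that an extreme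
   vector orthogonal to x is orthogonal to P_K x.  Hence extreme vectors can be
   chosen one at a time, each orthogonal to the previous ones; m of them,
   normalised, are the columns of an orthogonal A, and self-duality gives
   K = A R^m_+.  For K = R^m_+, P_K is the positive part; its L-isotonicity
   puts l^i e_i in L for every l in L, so the pointed generating cone L
   contains exactly one of e_i and - e_i for each i. *)

Ltac mx_ring := apply/matrixP => ? ?; rewrite !mxE; ring.

Section InnerProduct.
Context {R : realType} {m : nat}.
Local Notation V := 'cV[R]_m.
Implicit Types x y z : V.

Lemma dotvC x y : dotv x y = dotv y x.
Proof. by apply: eq_bigr => i _; rewrite mulrC. Qed.

Lemma dotvDl x y z : dotv (x + y) z = dotv x z + dotv y z.
Proof. by rewrite /dotv -big_split; apply: eq_bigr => i _; rewrite mxE mulrDl. Qed.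

Lemma dotvDr x y z : dotv z (x + y) = dotv z x + dotv z y.
Proof. by rewrite dotvC dotvDl !(dotvC z). Qed.

Lemma dotvZl (a : R) x y : dotv (a *: x) y = a * dotv x y.
Proof. by rewrite /dotv mulr_sumr; apply: eq_bigr => i _; rewrite mxE mulrA. Qed.

Lemma dotvZr (a : R) x y : dotv y (a *: x) = a * dotv y x.
Proof. by rewrite dotvC dotvZl dotvC. Qed.

Lemma dotvNl x y : dotv (- x) y = - dotv x y.
Proof. by rewrite -scaleN1r dotvZl mulN1r. Qed.

Lemma dotvNr x y : dotv y (- x) = - dotv y x.
Proof. by rewrite -scaleN1r dotvZr mulN1r. Qed.

Lemma dotvBl x y z : dotv (x - y) z = dotv x z - dotv y z.
Proof. by rewrite dotvDl dotvNl. Qed.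

Lemma dotvBr x y z : dotv z (x - y) = dotv z x - dotv z y.
Proof. by rewrite dotvDr dotvNr. Qed.

Lemma dotv0l x : dotv 0 x = 0.
Proof. by rewrite -(scale0r (0 : V)) dotvZl mul0r. Qed.

Lemma dotv0r x : dotv x 0 = 0.
Proof. by rewrite dotvC dotv0l. Qed.

Lemma dotvv_ge0 x : 0 <= dotv x x.
Proof. by apply: sumr_ge0 => i _; rewrite -expr2 sqr_ge0. Qed.

Lemma dotvv_eq0 {x} : dotv x x = 0 -> x = 0.
Proof.
move=> /eqP; rewrite psumr_eq0; last by move=> i _; rewrite -expr2 sqr_ge0.
move=> /allP x0; apply/matrixP => i j; rewrite (ord1 j) mxE.
by have := x0 i (mem_index_enum _); rewrite /= mulf_eq0 orbb => /eqP.
Qed.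

Lemma dotvv_gt0 {x} : x <> 0 -> 0 < dotv x x.
Proof.
move=> x0; rewrite lt_neqAle dotvv_ge0 andbT eq_sym; apply/eqP => /dotvv_eq0.
exact: x0.
Qed.

Lemma dotv_delta x i : dotv (delta_mx i 0) x = x i 0.
Proof.
rewrite /dotv (bigD1 i) //= big1 ?addr0; first by rewrite mxE !eqxx mul1r.
by move=> j ji; rewrite mxE (negbTE ji) mul0r.
Qed.

Lemma dotv_mulmx (A : 'M[R]_m) x y : dotv x (A *m y) = dotv (A^T *m x) y.
Proof.
rewrite /dotv; under eq_bigr do rewrite mxE mulr_sumr.
rewrite exchange_big /=; apply: eq_bigr => j _; rewrite mxE mulr_suml.
by apply: eq_bigr => i _; rewrite !mxE; ring.
Qed.

Lemma trmx_mulmx_coord (A : 'M[R]_m) x j : (A^T *m x) j 0 = dotv (col j A) x.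
Proof. by rewrite mxE; apply: eq_bigr => i _; rewrite !mxE. Qed.

End InnerProduct.

(* For a < 0 the quadratic is negative at t = - a / (b - a). *)
Lemma quadratic_ge0_coef {R : realFieldType} (a b : R) : 0 <= b ->
  (forall t, 0 < t -> t <= 1 -> 0 <= 2 * a * t + b * t ^+ 2) -> 0 <= a.
Proof.
move=> b0 q; rewrite leNgt; apply/negP => a0.
have ba : 0 < b - a by lra.
have t0 : 0 < - a / (b - a) by rewrite divr_gt0 // oppr_gt0.
have t1 : - a / (b - a) <= 1 by rewrite ler_pdivrMr // mul1r; lra.
have e : - a / (b - a) * (b - a) = - a by rewrite mulfVK // lt0r_neq0.
have := q _ t0 t1; move: e t0; move: (- a / (b - a)) => t; nra.
Qed.

Section MetricProjection.
Context {R : realType} {m : nat}.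
Local Notation V := 'cV[R]_m.
Implicit Types (D : set V) (x z p : V).

Lemma is_proj_variational D x p z : is_proj D x p ->
  (forall t : R, 0 < t -> t <= 1 -> D (p + t *: (z - p))) ->
  0 <= dotv (p - x) (z - p).
Proof.
move=> [_ pmin] Dseg; apply: quadratic_ge0_coef (dotvv_ge0 (z - p)) _ => t t0 t1.
have := pmin _ (Dseg t t0 t1).
have -> : x - (p + t *: (z - p)) = (x - p) - t *: (z - p) by mx_ring.
rewrite -[p - x]opprB; move: (x - p) (z - p) => w u.
rewrite !(dotvBl, dotvBr, dotvZl, dotvZr, dotvNl) (dotvC u w); nra.
Qed.

Lemma coord_sqr_le_dotv x i : x i 0 ^+ 2 <= dotv x x.
Proof.
rewrite /dotv (bigD1 i) //= -expr2 lerDl.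
by apply: sumr_ge0 => k _; rewrite -expr2 sqr_ge0.
Qed.

Lemma trmx_continuous a b : continuous (fun M : 'M[R]_(a, b) => M^T).
Proof.
move=> M A [P hP sPA]; exists (fun i j => P j i) => [i j|N HN].
  by have := hP j i; rewrite mxE.
by apply: sPA => i j; rewrite mxE; apply: HN.
Qed.

Lemma cV_compact {D} (B : R) :
  closed D -> (forall z, D z -> forall i, `|z i 0| <= B) -> compact D.
Proof.
move=> Dcl DB; pose D' := [set r : 'rV[R]_m | D r^T].
have -> : D = (fun r : 'rV[R]_m => r^T) @` D'.
  apply/seteqP; split => [z Dz|_ [r Dr <-] //].
  by exists z^T; rewrite /D' /= trmxK.
have D'b : [bounded r | r in D'].
  rewrite /bounded_near; near=> M => r Dr /=.
  have : `|r| <= `|B|.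
    have -> : `|r| = mx_norm r by [].
    rewrite mx_normrE; apply: bigmax_le => // -[i j] _ /=.
    rewrite (ord1 i); have := DB _ Dr j; rewrite mxE => /le_trans; apply.
    exact: ler_norm.
  move=> /le_trans; apply; near: M; apply: nbhs_pinfty_ge; exact: num_real.
apply: continuous_compact; first exact/continuous_subspaceT/trmx_continuous.
apply: bounded_closed_compact D'b _.
by apply: preimage_closed => // r _; apply: trmx_continuous.
Unshelve. all: by end_near.
Qed.

Lemma dist_continuous x : continuous (fun z : V => dotv (x - z) (x - z)).
Proof.
apply: continuous_big => [|i _ z]; first exact: add_continuous.
have hc : continuous (fun z0 : V => (x - z0) i 0).
  have -> : (fun z0 : V => (x - z0) i 0) = (fun z0 : V => x i 0 - z0 i 0).
    by apply: funext => z0; rewrite !mxE.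
  by move=> z0; apply: continuousB; [exact: cst_continuous | exact: coord_continuous].
exact: (continuousM (hc z) (hc z)).
Qed.

(* The distance is minimised over the compact set of points of D that are
   at least as close to x as a fixed point d of D. *)
Lemma is_proj_exists {D} x : closed D -> D !=set0 -> exists p, is_proj D x p.
Proof.
move=> Dcl [d Dd]; pose f z := dotv (x - z) (x - z).
pose S := D `&` f @^-1` [set r | r <= f d].
have Scl : closed S.
  apply: closedI => //; apply: preimage_closed; last exact: closed_le.
  by move=> z _; apply: dist_continuous.
have Sbound z : S z -> forall i, `|z i 0| <= \sum_k `|x k 0| + (1 + f d).
  move=> [_ fz] i; have xi : `|x i 0| <= \sum_k `|x k 0|.
    by rewrite (bigD1 i) //= lerDl sumr_ge0.
  have : (x i 0 - z i 0) ^+ 2 <= f d.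
    by have := coord_sqr_le_dotv (x - z) i; rewrite !mxE => /le_trans; apply.
  have := ler_normB (x i 0) (x i 0 - z i 0); rewrite opprB addrC subrK.
  move: (x i 0 - z i 0) => a za; rewrite expr2 => af.
  have : `|a| <= 1 + f d by rewrite ler_norml; apply/andP; split; nra.
  lra.
have Sd : S d by split=> //; exact: lexx.
have [p /set_mem [Dp _] pmin] := compact_EVT_min (ex_intro _ d Sd)
  (cV_compact _ Scl Sbound) (continuous_subspaceT (@dist_continuous x)).
exists p; split=> // z Dz; have [fz|fz] := leP (f z) (f d).
  by apply/pmin/mem_set.
by apply: le_trans (ltW fz); apply/pmin/mem_set.
Qed.

End MetricProjection.

Section SelfDualCone.
Context {R : realType} {m : nat}.
Local Notation V := 'cV[R]_m.
Implicit Types x y z p q : V.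
Context {K : set V}.
Hypotheses (Kcc : convex_cone K) (Ksd : self_dual K).

Lemma cone0 : K 0.
Proof. by case: Kcc => -[x Kx] [_ KZ]; rewrite -(scale0r x); apply: KZ. Qed.

Lemma coneD {x y} : K x -> K y -> K (x + y).
Proof. by case: Kcc => _ [KD _]; apply: KD. Qed.

Lemma coneZ {t : R} {x} : 0 <= t -> K x -> K (t *: x).
Proof. by case: Kcc => _ [_ KZ]; apply: KZ. Qed.

Lemma cone_le_trans y x z : K (x - y) -> K (y - z) -> K (x - z).
Proof. by move=> Kxy Kyz; rewrite -(subrKA y x (- z)); apply: coneD. Qed.

Lemma self_dual_ge0 {x y} : K x -> K y -> 0 <= dotv x y.
Proof. by move=> Kx; rewrite {1}Ksd => /(_ x Kx). Qed.

Lemma self_dualP y : (forall x, K x -> 0 <= dotv x y) -> K y.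
Proof. by move=> Hy; rewrite Ksd. Qed.

Lemma self_dual_pointed {x} : K x -> K (- x) -> x = 0.
Proof.
move=> Kx Knx; apply: dotvv_eq0; apply/eqP; rewrite eq_le dotvv_ge0 andbT.
by rewrite -oppr_ge0 -dotvNr; apply: self_dual_ge0.
Qed.

Lemma self_dual_dotv_le {u} v w : K u -> K (w - v) -> dotv u v <= dotv u w.
Proof. by move=> Ku /(self_dual_ge0 Ku); rewrite dotvBr subr_ge0. Qed.

Lemma cone_segment p z (t : R) : K p -> K z -> 0 <= t -> t <= 1 ->
  K (p + t *: (z - p)).
Proof.
move=> Kp Kz t0 t1.
have -> : p + t *: (z - p) = (1 - t) *: p + t *: z.
  by rewrite scalerBr scalerBl scale1r; mx_ring.
by apply: coneD; apply: coneZ; rewrite ?subr_ge0.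
Qed.

(* Moreau's decomposition x = p - (p - x).  Forward: the variational
   inequality at z = p + k (k in K), z = 0 and z = p + p. *)
Lemma is_projP x p : is_proj K x p <-> [/\ K p, K (p - x) & dotv p (p - x) = 0].
Proof.
split=> [hp|[Kp Kpx pxp]].
  have Kp := hp.1.
  have var z : K z -> 0 <= dotv (p - x) (z - p).
    move=> Kz; apply: is_proj_variational hp _ => t t0 t1.
    by apply: cone_segment => //; apply: ltW.
  have Kpx : K (p - x).
    apply: self_dualP => z Kz; rewrite dotvC.
    by have := var _ (coneD Kp Kz); rewrite [p + z]addrC addrK.
  split=> //; apply/eqP; rewrite eq_le self_dual_ge0 // andbT dotvC.
  by have := var _ cone0; rewrite sub0r dotvNr oppr_ge0.
split=> // z Kz; have zpx := self_dual_ge0 Kpx Kz.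
have -> : x - z = (p - z) - (p - x) by mx_ring.
have -> : x - p = - (p - x) by mx_ring.
move: (p - x) Kpx pxp zpx => w _ pw wz.
have := dotvv_ge0 (p - z); move: pw wz.
rewrite !(dotvBl, dotvBr, dotvNl, dotvNr) (dotvC z p) (dotvC w p) (dotvC w z).
lra.
Qed.

Lemma is_proj_uniq x p q : is_proj K x p -> is_proj K x q -> p = q.
Proof.
move=> /is_projP[Kp Kpx pp] /is_projP[Kq Kqx qq].
have := self_dual_ge0 Kq Kpx; have := self_dual_ge0 Kp Kqx.
move=> h1 h2; apply/subr0_eq/dotvv_eq0; move: h1 h2.
have -> : p - q = (p - x) - (q - x) by mx_ring.
have := dotvv_ge0 ((p - x) - (q - x)); move: pp qq.
rewrite !(dotvBl, dotvBr) (dotvC x p) (dotvC x q) (dotvC q p); lra.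
Qed.

Lemma is_proj_id {x} : K x -> is_proj K x x.
Proof.
by move=> Kx; apply/is_projP; rewrite subrr dotv0r; split=> //; apply: cone0.
Qed.

Lemma is_proj_opp_cone {x} : K x -> is_proj K (- x) 0.
Proof.
by move=> Kx; apply/is_projP; rewrite sub0r opprK dotv0l; split=> //; apply: cone0.
Qed.

Lemma is_proj_opp {x p} : is_proj K x p -> is_proj K (- x) (p - x).
Proof. by move=> /is_projP[Kp Kpx px]; apply/is_projP; rewrite opprK subrK dotvC. Qed.

End SelfDualCone.

Section OrthogonalFamilies.
Context {R : realType} {m : nat}.
Local Notation V := 'cV[R]_m.
Implicit Types (s : seq V) (u v : V).

Definition orthv u v : bool := dotv u v == 0.

Lemma pairwise_orthv_nth s (i j : nat) : pairwise orthv s ->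
  (i < size s)%N -> (j < size s)%N -> i != j -> dotv (nth 0 s i) (nth 0 s j) = 0.
Proof.
move=> /(pairwiseP 0) so ilt jlt; rewrite neq_ltn => /orP[ij|ji].
  by apply/eqP; apply: so.
by rewrite dotvC; apply/eqP; apply: so.
Qed.

Definition rowsmx s : 'M[R]_(size s, m) := \matrix_(i, j) (nth 0 s i) j 0.

Lemma rowsmx_mulmx s (i : 'I_(size s)) v : (rowsmx s *m v) i 0 = dotv (nth 0 s i) v.
Proof. by rewrite mxE; apply: eq_bigr => k _; rewrite mxE. Qed.

(* The Gram matrix of the family is diagonal with nonzero entries, hence
   invertible, so the family has full row rank. *)
Lemma orthogonal_family_size s :
  (forall v, v \in s -> v <> 0) -> pairwise orthv s -> (size s <= m)%N.
Proof.
move=> s0 so; pose M := rowsmx s.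
pose d := \row_(i < size s) dotv (nth 0 s i) (nth 0 s i).
have gram : M *m M^T = diag_mx d.
  apply/matrixP => i j; rewrite !mxE.
  have -> : \sum_k M i k * M^T k j = dotv (nth 0 s i) (nth 0 s j).
    by apply: eq_bigr => k _; rewrite !mxE.
  have [->|ij] := eqVneq i j; first by rewrite mulr1n.
  by rewrite mulr0n pairwise_orthv_nth.
have : M *m M^T \in unitmx.
  rewrite gram unitmxE det_diag unitfE; apply/prodf_neq0 => i _; rewrite mxE.
  by apply/eqP => /dotvv_eq0; apply: s0; apply: mem_nth.
move=> /mxrank_unit rk; have := mxrankM_maxl M M^T; rewrite rk => /leq_trans.
by apply; apply: rank_leq_col.
Qed.

Lemma exists_orthogonal s : (size s < m)%N ->
  exists2 n : V, n <> 0 & forall v, v \in s -> dotv v n = 0.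
Proof.
move=> lt; pose Ker := kermx (rowsmx s)^T.
have [i ri] : exists i, row i Ker != 0.
  apply: contrapT => Ker0; suff : \rank Ker = 0%N.
    rewrite mxrank_ker mxrank_tr => /eqP; rewrite subn_eq0 leqNgt => /negP; apply.
    exact: leq_ltn_trans (rank_leq_row _) lt.
  suff -> : Ker = 0 by rewrite mxrank0.
  apply/row_matrixP => i; rewrite row0; apply/eqP; apply: contrapT => /negP ri.
  by apply: Ker0; exists i.
exists (row i Ker)^T => [n0|v /(nthP 0)[j js <-]].
  by move: ri; rewrite -[row i Ker]trmxK n0 trmx0 eqxx.
rewrite -[j]/(nat_of_ord (Ordinal js)) -rowsmx_mulmx.
by rewrite -[_ *m _]trmxK trmx_mul trmxK -row_mul mulmx_ker row0 trmx0 mxE.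
Qed.

Lemma orthogonal_mx_of_family {s} : size s = m ->
  (forall v, v \in s -> v <> 0) -> pairwise orthv s ->
  exists A : 'M[R]_m, orthogonal_mx A /\
    forall j : 'I_m, exists2 c : R, 0 < c & col j A = c *: nth 0 s j.
Proof.
move=> sz s0 so; pose d (j : 'I_m) := dotv (nth 0 s j) (nth 0 s j).
have js (j : 'I_m) : (j < size s)%N by rewrite sz.
have d0 j : 0 < d j by apply/dotvv_gt0/s0/mem_nth.
pose A := \matrix_(i < m, j < m) ((nth 0 s j) i 0 / Num.sqrt (d j)).
have colA j : col j A = (Num.sqrt (d j))^-1 *: nth 0 s j.
  by apply/matrixP => i k; rewrite (ord1 k) !mxE mulrC.
exists A; split.
  2: by move=> j; exists (Num.sqrt (d j))^-1; rewrite ?colA // invr_gt0 sqrtr_gt0.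
apply: mulmx1C; apply/matrixP => i j; rewrite !mxE.
have -> : \sum_k A^T i k * A k j = dotv (col i A) (col j A).
  by apply: eq_bigr => k _; rewrite !mxE.
rewrite !colA dotvZl dotvZr.
have [<-|ij] := eqVneq i j.
  rewrite mulr1n mulrA -invfM -expr2 sqr_sqrtr ?ltW // mulVf //; exact: lt0r_neq0.
by rewrite mulr0n pairwise_orthv_nth // ?mulr0 //; apply: contra ij => /eqP/val_inj ->.
Qed.

End OrthogonalFamilies.

Lemma self_dual_orthant_image {R : realType} {m : nat} (K : set 'cV[R]_m)
    (A : 'M[R]_m) :
  self_dual K -> orthogonal_mx A -> (forall j, K (col j A)) ->
  K = mulmx A @` @nonneg_orthant R m.
Proof.
move=> Ksd AAt colK; apply/seteqP; split => [x Kx|_ [c c0 <-]].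
  exists (A^T *m x); last by rewrite mulmxA AAt mul1mx.
  by move=> j; rewrite trmx_mulmx_coord; apply: (self_dual_ge0 Ksd).
apply: (self_dualP Ksd) => y Ky; rewrite dotv_mulmx.
apply: sumr_ge0 => j _; apply: mulr_ge0 (c0 j).
by rewrite trmx_mulmx_coord; apply: (self_dual_ge0 Ksd).
Qed.

Section IsotoneSelfDualCone.
Context {R : realType} {m : nat}.
Local Notation V := 'cV[R]_m.
Implicit Types (x y z a b c e v : V) (s : seq V).
Context {K : set V}.
Hypotheses (Kcc : convex_cone K) (Ksd : self_dual K) (Kcl : closed K).
Hypothesis Kiso : forall x y px py,
  K (y - x) -> is_proj K x px -> is_proj K y py -> K (py - px).

Definition projK x : V := xget 0 [set p | is_proj K x p].

Lemma projKP x : is_proj K x (projK x).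
Proof.
have [p px] := is_proj_exists x Kcl (ex_intro _ 0 (cone0 Kcc)).
by apply: xgetPex; exists p.
Qed.

Lemma projK_in x : K (projK x).
Proof. by case: (projKP x). Qed.

Lemma projK_sub x : K (projK x - x).
Proof. by have /(is_projP Kcc Ksd)[] := projKP x. Qed.

Lemma projK_orth x : dotv (projK x) (projK x - x) = 0.
Proof. by have /(is_projP Kcc Ksd)[] := projKP x. Qed.

Lemma projK_eq x p : is_proj K x p -> projK x = p.
Proof. exact: is_proj_uniq Kcc Ksd _ _ _ (projKP x). Qed.

Lemma projK_id x : K x -> projK x = x.
Proof. by move=> Kx; apply/projK_eq/(is_proj_id Kcc Ksd). Qed.

Lemma projK_opp x : projK (- x) = projK x - x.
Proof. by apply/projK_eq/(is_proj_opp Kcc Ksd)/projKP. Qed.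

Lemma projK_eq0 x : projK x = 0 -> K (- x).
Proof. by move=> px0; have := projK_in (- x); rewrite projK_opp px0 sub0r. Qed.

Lemma projK_mono x y : K (y - x) -> K (projK y - projK x).
Proof. by move=> /Kiso; apply; apply: projKP. Qed.

Lemma projK_le x y : K x -> K (x - y) -> K (x - projK y).
Proof. by move=> Kx /projK_mono; rewrite projK_id. Qed.

Definition extreme_vector e :=
  [/\ K e, e <> 0 & forall c, K c -> K (e - c) -> exists s : R, c = s *: e].

(* Apply extremality to the vector a - P_K(a - b), which lies between 0 and a. *)
Lemma extreme_vector_dichotomy {a b} : extreme_vector a -> K b ->
  dotv a b = 0 \/ exists2 s : R, 0 < s & K (b - s *: a).
Proof.
move=> [Ka a0 aext] Kb; pose q := a - projK (a - b).
have Kq : K q by apply: projK_le; rewrite // opprB addrC subrK.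
have Kaq : K (a - q) by rewrite /q opprB addrC subrK; apply: projK_in.
have Kbq : K (b - q).
  have -> : b - q = projK (a - b) - (a - b) by rewrite /q; mx_ring.
  exact: projK_sub.
have [s qs] := aext q Kq Kaq.
have [s0|s0|s0] := ltgtP s 0.
- case: a0; apply: (self_dual_pointed Ksd Ka).
  have -> : - a = (- s^-1) *: q by rewrite qs scalerA mulNr mulVf ?scaleN1r ?lt_eqF.
  by apply: coneZ => //; rewrite oppr_ge0 ltW // invr_lt0.
- by right; exists s; rewrite -?qs.
- left; move: qs; rewrite s0 scale0r /q => /subr0_eq e.
  by have := projK_orth (a - b); rewrite -e opprB addrC subrK.
Qed.

Lemma extreme_vector_orth_projK {v n} : extreme_vector v -> dotv v n = 0 ->
  dotv v (projK n) = 0.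
Proof.
move=> ev vn; have [Kv _ _] := ev.
have en : projK n = projK (- n) + n by rewrite projK_opp subrK.
have o : dotv (projK (- n)) (projK n) = 0 by rewrite projK_opp dotvC projK_orth.
case: (extreme_vector_dichotomy ev (projK_in n)) => // -[s s0 Ks].
have := self_dual_ge0 Ksd (projK_in (- n)) Ks; rewrite dotvBr dotvZr o sub0r.
rewrite oppr_ge0 pmulr_rle0 // en dotvDr vn addr0 dotvC => le0.
by apply/eqP; rewrite eq_le le0 (self_dual_ge0 Ksd Kv (projK_in (- n))).
Qed.

Definition orth_family_below a s :=
  (forall v, v \in s -> [/\ K v, K (a - v) & v <> 0]) /\ pairwise orthv s.

Lemma orth_family_below_size a s : orth_family_below a s -> (size s <= m)%N.
Proof. by move=> [sa so]; apply: orthogonal_family_size so => v /sa[]. Qed.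

Lemma orth_family_below_cons {a b b' s} : orth_family_below b s ->
  K (a - b) -> K b' -> K (a - b') -> b' <> 0 -> dotv b b' = 0 ->
  orth_family_below a (b' :: s).
Proof.
move=> [sb so] Kab Kb' Kab' b'0 bb'; split.
  move=> v; rewrite inE => /predU1P[->|/sb[Kv Kbv v0]]; split=> //.
  exact: cone_le_trans Kcc _ _ _ Kab Kbv.
rewrite /= so andbT; apply/allP => v /sb[Kv Kbv _]; rewrite /orthv eq_le.
rewrite (self_dual_ge0 Ksd Kb' Kv) andbT -bb' (dotvC b).
by rewrite (self_dual_dotv_le Ksd _ _ Kb' Kbv).
Qed.

(* Some c between 0 and a is not a multiple of a.  For the component x of c
   orthogonal to a, isotonicity puts P_K x below c and P_K (- x) below t a,
   and the two are orthogonal by Moreau's decomposition. *)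
Lemma nonextreme_split {a} : K a -> a <> 0 -> ~ extreme_vector a ->
  exists b b', [/\ K b, K b', b <> 0, b' <> 0 & dotv b b' = 0] /\
    K (a - b) /\ K (a - b').
Proof.
move=> Ka a0 na.
have [c [Kc Kac nc]] : exists c, [/\ K c, K (a - c) & forall s : R, c <> s *: a].
  apply: contrapT => nex; apply: na; split=> // c Kc Kac.
  by apply: contrapT => ns; apply: nex; exists c; split=> // s cs; apply: ns; exists s.
have aa := dotvv_gt0 a0; pose t := dotv c a / dotv a a; pose x := c - t *: a.
have xa : dotv x a = 0 by rewrite dotvBl dotvZl mulfVK ?subrr ?gt_eqF.
have x0 : x <> 0 by move=> /subr0_eq; apply: nc.
have xc : dotv x c = dotv x x.
  by rewrite -(subrK (t *: a) c) dotvDr dotvZr xa mulr0 addr0.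
have xx := dotvv_gt0 x0.
have t0 : 0 <= t by rewrite divr_ge0 ?(self_dual_ge0 Ksd) ?ltW.
have Kcb : K (c - projK x).
  by apply: projK_le; rewrite // opprB addrC subrK; apply: coneZ.
have Ktb' : K (t *: a - projK (- x)).
  by apply: projK_le; [apply: coneZ | rewrite opprK /x addrC subrK].
have b0 : projK x <> 0.
  by move=> /projK_eq0 Kx; have := self_dual_ge0 Ksd Kx Kc; rewrite dotvNl xc; lra.
have b'0 : projK (- x) <> 0.
  move=> /projK_eq0; rewrite opprK => Kx; have := self_dual_ge0 Ksd Kx Kac.
  by rewrite dotvBr xc xa; lra.
have tp : 0 < t.
  rewrite lt_neqAle t0 andbT; apply/eqP => t0'; apply: b'0.
  by apply: (self_dual_pointed Ksd) (projK_in _) _; rewrite -sub0r -(scale0r a) t0'.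
exists (projK x), (t^-1 *: projK (- x)); split; [split|split].
- exact: projK_in.
- by apply: (coneZ Kcc _ (projK_in _)); rewrite invr_ge0 ltW.
- exact: b0.
- by move=> /eqP; rewrite scaler_eq0 invr_eq0 gt_eqF //= => /eqP.
- by rewrite dotvZr projK_opp projK_orth mulr0.
- exact: cone_le_trans Kcc _ _ _ Kac Kcb.
- have -> : a - t^-1 *: projK (- x) = t^-1 *: (t *: a - projK (- x)).
    by rewrite scalerBr scalerA mulVf ?scale1r ?gt_eqF.
  by apply: (coneZ Kcc _ Ktb'); rewrite invr_ge0 ltW.
Qed.

(* Induction on a bound for the length of orthogonal families below a: each
   such family below the b of nonextreme_split extends by b' to one below a. *)
Lemma exists_extreme_below {a} : K a -> a <> 0 ->
  exists2 e, extreme_vector e & K (a - e).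
Proof.
suff : forall n a, K a -> a <> 0 ->
    (forall s, orth_family_below a s -> (size s <= n)%N) ->
    exists2 e, extreme_vector e & K (a - e).
  by move=> descent Ka a0; apply: (descent m _ Ka a0) => s /orth_family_below_size.
elim=> [|n IH] {}a Ka a0 bound.
  have : orth_family_below a [:: a].
    by split=> // v; rewrite inE => /eqP ->; split=> //; rewrite subrr; apply: cone0.
  by move=> /bound.
have [ea|na] := pselect (extreme_vector a).
  by exists a; rewrite // subrr; apply: cone0.
have [b [b' [[Kb Kb' b0 b'0 bb'] [Kab Kab']]]] := nonextreme_split Ka a0 na.
have [e ee Kbe] : exists2 e, extreme_vector e & K (b - e).
  apply: IH Kb b0 _ => s /orth_family_below_cons /(_ Kab Kb' Kab' b'0 bb').
  by move=> /bound; rewrite ltnS.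
by exists e => //; apply: cone_le_trans Kcc _ _ _ Kab Kbe.
Qed.

Lemma exists_extreme_orth {s} : (forall v, v \in s -> extreme_vector v) ->
  (size s < m)%N -> exists2 e, extreme_vector e & all (orthv e) s.
Proof.
move=> se /exists_orthogonal[n n0 sn].
have [p [Kp p0 sp]] : exists p, [/\ K p, p <> 0 & forall v, v \in s -> dotv v p = 0].
  have [pn0|pn0] := eqVneq (projK n) 0.
    exists (projK (- n)); split; first exact: projK_in.
      by rewrite projK_opp pn0 sub0r => /eqP; rewrite oppr_eq0 => /eqP.
    move=> v vs; apply: extreme_vector_orth_projK (se v vs) _.
    by rewrite dotvNr sn ?oppr0.
  exists (projK n); split; [exact: projK_in | exact/eqP |].
  by move=> v vs; apply: extreme_vector_orth_projK (se v vs) (sn v vs).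
have [e ee Kpe] := exists_extreme_below Kp p0.
exists e => //; apply/allP => v vs; have [Ke _ _] := ee; have [Kv _ _] := se v vs.
rewrite /orthv eq_le (self_dual_ge0 Ksd Ke Kv) andbT dotvC.
by rewrite -(sp v vs) (self_dual_dotv_le Ksd _ _ Kv Kpe).
Qed.

Lemma extreme_orth_basis : exists s : seq V,
  [/\ size s = m, forall v, v \in s -> extreme_vector v & pairwise orthv s].
Proof.
suff : forall j, (j <= m)%N -> exists s : seq V,
    [/\ size s = j, forall v, v \in s -> extreme_vector v & pairwise orthv s].
  exact.
elim=> [|j IH] jm; first by exists [::].
have [s [sz se so]] := IH (ltnW jm).
have [e ee es] : exists2 e, extreme_vector e & all (orthv e) s.
  by apply: exists_extreme_orth se _; rewrite sz.
exists (e :: s); split; rewrite /= ?sz ?es ?so //.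
by move=> v; rewrite inE => /predU1P[->|/se].
Qed.

Theorem isotone_self_dual_cone_orthant :
  exists A : 'M[R]_m, orthogonal_mx A /\ K = mulmx A @` @nonneg_orthant R m.
Proof.
have [s [sz se so]] := extreme_orth_basis.
have s0 v : v \in s -> v <> 0 by move=> /se[].
have [A [oA colA]] := orthogonal_mx_of_family sz s0 so.
exists A; split => //; apply: self_dual_orthant_image => // j.
have [c c0 ->] := colA j; apply: (coneZ Kcc (ltW c0)).
have js : (j < size s)%N by rewrite sz.
by have [] := se _ (mem_nth 0 js).
Qed.

End IsotoneSelfDualCone.

Section NonnegOrthant.
Context {R : realType} {m : nat}.
Local Notation V := 'cV[R]_m.
Local Notation O := (@nonneg_orthant R m).
Implicit Types (x y : V) (L : set V).

Definition posv x : V := \col_i Num.max (x i 0) 0.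

Lemma orthant_convex_cone : convex_cone O.
Proof.
split; first by exists 0 => i; rewrite mxE.
split=> [x y Ox Oy i|t x t0 Ox i]; rewrite mxE; first exact: addr_ge0.
exact: mulr_ge0.
Qed.

Lemma orthant_self_dual : self_dual O.
Proof.
apply/seteqP; split=> [x Ox y Oy|x Ox i].
  by apply: sumr_ge0 => i _; apply: mulr_ge0.
by rewrite -dotv_delta; apply: (Ox (delta_mx i 0)) => j; rewrite mxE; case: (_ && _).
Qed.

Lemma orthant_closed : closed O.
Proof.
have -> : O = \bigcap_(i in [set: 'I_m]) ((fun x : V => x i 0) @^-1` [set r | 0 <= r]).
  by apply/seteqP; split=> x Ox i; [move=> _; apply: Ox | apply: Ox].
apply: closed_bigI => i _; apply: preimage_closed; last exact: closed_ge.
by move=> x _; apply: coord_continuous.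
Qed.

Local Open Scope convex_scope.
Lemma orthant_convex : convex_set O.
Proof.
move=> x y l /set_mem Ox /set_mem Oy; apply/mem_set => i.
have -> : (x <| l |> y) = l%:inum *: x + (1 - l%:inum) *: y by [].
by rewrite !mxE; apply: addr_ge0; apply: mulr_ge0; rewrite ?subr_ge0.
Qed.
Local Close Scope convex_scope.

Lemma is_proj_posv x : is_proj O x (posv x).
Proof.
apply/(is_projP orthant_convex_cone orthant_self_dual); split.
- by move=> i; rewrite mxE le_max lexx orbT.
- by move=> i; rewrite !mxE subr_ge0 le_max lexx.
- apply: big1 => i _; rewrite !mxE maxEle; case: ifP => _; first by rewrite mul0r.
  by rewrite subrr mulr0.
Qed.

Lemma is_proj_orthantE x p : is_proj O x p -> p = posv x.
Proof.
move=> px.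
exact: is_proj_uniq orthant_convex_cone orthant_self_dual _ _ _ px (is_proj_posv x).
Qed.

Lemma isotone_orthant L : is_orthant L -> isotone_proj_set L O.
Proof.
move=> [eps [epsv ->]]; split; first by exists 0 => i; rewrite mxE.
split; first exact: orthant_closed.
split; first exact: orthant_convex.
move=> x y px py + /is_proj_orthantE -> /is_proj_orthantE -> => xy i.
have := xy i; rewrite !mxE !maxEle.
by case: (epsv i) => ->; case: ifP => h1; case: ifP => h2; lra.
Qed.

(* Off the i-th coordinate both x and x + l are nonpositive, at it both are
   nonnegative. *)
Lemma posv_sub_delta (l : V) i :
  let x := \col_j (if j == i then `|l j 0| else - `|l j 0|) in
  posv (x + l) - posv x = l i 0 *: delta_mx i 0.
Proof.
apply/matrixP => j k; rewrite (ord1 k) !mxE eqxx andbT eq_sym !maxEle.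
have := ler_norm (l j 0); have := ler_norm (- l j 0); rewrite normrN.
have := normr_ge0 (l j 0).
by case: (eqVneq i j) => [->|_] /=; case: ifP => h1; case: ifP => h2; lra.
Qed.

Section IsotoneOrthant.
Variable L : set V.
Hypotheses (Lcc : convex_cone L) (Lpt : pointed L) (Lgen : generating L).
Hypothesis Liso : forall x y, L (y - x) -> L (posv y - posv x).

Lemma cone_coord_line {l} i : L l -> L (l i 0 *: delta_mx i 0).
Proof. by move=> Ll; rewrite -posv_sub_delta; apply: Liso; rewrite addrC addKr. Qed.

Lemma cone_sign_line {a i} : a != 0 -> L (a *: delta_mx i 0) ->
  L (Num.sg a *: (delta_mx i 0 : V)).
Proof.
move=> a0 La; have -> : Num.sg a = `|a|^-1 * a.
  by rewrite mulrC -[X in X / _](mulr_sg_norm a) mulfK ?normr_eq0.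
by rewrite -scalerA; apply: (coneZ Lcc) La; rewrite invr_ge0.
Qed.

Lemma cone_coord_sign {l} i : L l -> l i 0 != 0 ->
  L (Num.sg (l i 0) *: (delta_mx i 0 : V)).
Proof. by move=> Ll li0; apply: cone_sign_line li0 (cone_coord_line i Ll). Qed.

Definition orthant_sign i : R := if pselect (L (delta_mx i 0)) then 1 else -1.

Lemma orthant_signP i : orthant_sign i = 1 \/ orthant_sign i = -1.
Proof. by rewrite /orthant_sign; case: pselect; [left | right]. Qed.

Lemma cone_orthant_sign_delta i : L (orthant_sign i *: delta_mx i 0).
Proof.
rewrite /orthant_sign; case: pselect => [Ld|nLd]; first by rewrite scale1r.
have [a [b [La [Lb e]]]] := Lgen (delta_mx i 0).
have ab : a i 0 - b i 0 = 1.
  by have := congr1 (fun v : V => v i 0) e; rewrite !mxE !eqxx => <-.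
have [a0|a0] := ltP 0 (a i 0).
  by case: nLd; have := cone_coord_sign i La (lt0r_neq0 a0); rewrite gtr0_sg ?scale1r.
have b0 : b i 0 < 0 by lra.
by have := cone_coord_sign i Lb (ltr0_neq0 b0); rewrite ltr0_sg.
Qed.

Lemma cone_orthant_sign_ge0 l i : L l -> 0 <= orthant_sign i * l i 0.
Proof.
move=> Ll; have [->|li0] := eqVneq (l i 0) 0; first by rewrite mulr0.
have Lsg := cone_coord_sign i Ll li0; have Ld := cone_orthant_sign_delta i.
move: Ld; rewrite /orthant_sign; case: pselect => [Ld _|nLd _].
  rewrite mul1r leNgt; apply/negP => l0; move: Lsg; rewrite ltr0_sg // scaleN1r.
  by move=> /(Lpt _ Ld) /matrixP /(_ i 0); rewrite !mxE !eqxx => /eqP; rewrite oner_eq0.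
rewrite mulN1r oppr_ge0 leNgt; apply/negP => l0; apply: nLd.
by move: Lsg; rewrite gtr0_sg // scale1r.
Qed.

Lemma orthant_of_isotone : is_orthant L.
Proof.
exists orthant_sign; split; first exact: orthant_signP.
apply/seteqP; split=> [l Ll i|x xL]; first exact: cone_orthant_sign_ge0.
rewrite (matrix_sum_delta x).
apply: big_ind => [|y z|i _]; [exact: cone0 Lcc | exact: (coneD Lcc) |].
rewrite big_ord1.
have -> : x i 0 *: delta_mx i 0 =
    (orthant_sign i * x i 0) *: (orthant_sign i *: (delta_mx i 0 : V)).
  by rewrite scalerA; congr (_ *: _); case: (orthant_signP i) => ->; ring.
by apply: (coneZ Lcc) (xL i) (cone_orthant_sign_delta i).
Qed.

End IsotoneOrthant.

Lemma orthant_isotoneE L : proper_cone L ->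
  (isotone_proj_set L O <-> is_orthant L).
Proof.
move=> [Lcc [_ [Lpt Lgen]]]; split; last exact: isotone_orthant.
move=> [_ [_ [_ iso]]]; apply: orthant_of_isotone => // x y xy.
by apply: iso xy _ _; apply: is_proj_posv.
Qed.

End NonnegOrthant.

Lemma interior_shift {R : realType} {m : nat} {K : set 'cV[R]_m} {u} :
  K° u -> forall z, exists2 eps : R, 0 < eps & K (u + eps *: z).
Proof.
move=> /nbhs_ballP[e /= e0 uK] z; have nz := normr_ge0 z.
have d0 : 0 < 2 * (`|z| + 1) by lra.
exists (e / (2 * (`|z| + 1))); first by rewrite divr_gt0.
apply: uK; rewrite -ball_normE /ball_ /= opprD addrA subrr sub0r normrN normrZ.
rewrite ger0_norm ?divr_ge0 ?ltW // mulrAC ltr_pdivrMr //; nra.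
Qed.

Section IsotoneProjectionCone.
Context {R : realType} {m : nat}.
Local Notation V := 'cV[R]_m.
Context {K L : set V}.
Hypotheses (Kcc : convex_cone K) (Ksd : self_dual K) (Kcl : closed K).
Hypotheses (Lcc : convex_cone L) (Lpt : pointed L) (Lgen : generating L).
Hypothesis Kiso : forall x y px py,
  L (y - x) -> is_proj K x px -> is_proj K y py -> L (py - px).

(* Isotonicity applied to - w <=_L k, where P_K (- w) = 0 and P_K k = k. *)
Lemma isotone_cone_add_mem w k : K w -> K k -> L (k + w) -> L k.
Proof.
move=> Kw Kk Lkw; rewrite -[k]subr0.
apply: (Kiso _ _ _ _ _ (is_proj_opp_cone Kcc Ksd Kw) (is_proj_id Kcc Ksd Kk)).
by rewrite opprK.
Qed.

Lemma isotone_proj_opp {l p} : L l -> is_proj K (- l) p -> L (- p) /\ K (p + l).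
Proof.
move=> Ll pl; have /(is_projP Kcc Ksd)[_ Kpl _] := pl.
split; last by rewrite opprK in Kpl.
rewrite -sub0r; apply: (Kiso _ _ _ _ _ pl (is_proj_id Kcc Ksd (cone0 Kcc))).
by rewrite sub0r opprK.
Qed.

Lemma is_proj_cone_exists x : exists p, is_proj K x p.
Proof. exact: is_proj_exists _ Kcl (ex_intro _ 0 (cone0 Kcc)). Qed.

Lemma isotone_interior_eq : (K° `&` L) !=set0 -> L = K.
Proof.
move=> [u [Ku Lu]].
have KL : K `<=` L.
  move=> k Kk; have [eps eps0 Kuk] := interior_shift Ku (- k).
  apply: (isotone_cone_add_mem (eps^-1 *: (u + eps *: - k))) => //.
    by apply: (coneZ Kcc) Kuk; rewrite invr_ge0 ltW.
  rewrite scalerDr scalerA mulVf ?gt_eqF // scale1r addrC subrK.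
  by apply: (coneZ Lcc) Lu; rewrite invr_ge0 ltW.
apply/seteqP; split=> // l Ll; have [p pl] := is_proj_cone_exists (- l).
have [Lnp Kpl] := isotone_proj_opp Ll pl.
have p0 : p = 0 by apply: Lpt (KL _ pl.1) Lnp.
by rewrite p0 add0r in Kpl.
Qed.

Lemma isotone_interior_dual_eq : (K° `&` dual_cone L) !=set0 -> L = K.
Proof.
move=> [u [Ku Lu]].
have LK : L `<=` K.
  move=> l Ll; have [p pl] := is_proj_cone_exists (- l).
  have [Lnp Kpl] := isotone_proj_opp Ll pl.
  suff p0 : p = 0 by rewrite p0 add0r in Kpl.
  apply: dotvv_eq0; apply/eqP; rewrite eq_le dotvv_ge0 andbT.
  have [eps eps0 Kup] := interior_shift Ku (- p).
  have := Lu _ Lnp; have := self_dual_ge0 Ksd pl.1 Kup.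
  rewrite dotvNl dotvDr dotvZr dotvNr -(pmulr_rle0 _ eps0); lra.
apply/seteqP; split=> // k Kk; have [a [b [La [Lb kab]]]] := Lgen k.
by apply: (isotone_cone_add_mem b) => //; [apply: LK | rewrite kab subrK].
Qed.

End IsotoneProjectionCone.

Theorem corollary1 (R : realType) (m : nat) :
  (forall K L : set 'cV[R]_m,
      convex_cone K -> self_dual K -> proper_cone L ->
      isotone_proj_set L K ->
      ((K° `&` L) !=set0 \/ (K° `&` dual_cone L) !=set0) ->
      exists A : 'M[R]_m, orthogonal_mx A /\ K = (mulmx A) @` @nonneg_orthant R m)
  /\
  (forall L : set 'cV[R]_m, proper_cone L ->
      (isotone_proj_set L (@nonneg_orthant R m) <-> is_orthant L)).
Proof.
split=> [K L Kcc Ksd [Lcc [_ [Lpt Lgen]]] [_ [Kcl [_ Kiso]]] int_meet|L].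
  have LK : L = K.
    by case: int_meet; [apply: isotone_interior_eq | apply: isotone_interior_dual_eq].
  rewrite LK in Kiso.
  exact: isotone_self_dual_cone_orthant Kcc Ksd Kcl Kiso.
exact: orthant_isotoneE.
Qed.
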